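(* Let $(T,f,(\le_h))$ be an ordered merge tree. Define the relation $\sqsubseteq_L$ on the leaf set $L(T)$ by: $u_1\sqsubseteq_L u_2$ iff $\mathrm{anc}_h(u_1)\le_h\mathrm{anc}_h(u_2)$, where $h=\max(f(u_1),f(u_2))$. Then $\sqsubseteq_L$ is a total order on $L(T)$.
   Context: A merge tree $(T,f)$: a finite rooted tree $T$ identified with its topological realisation, with a continuous $f\colon T\to\mathbb{R}\cup\{\infty\}$ strictly increasing towards the root, $f(v)=\infty$ iff $v$ is the root; lowest leaf at height $0$; $L(T)$ is the set of leaves. $x_1\preceq x_2$ iff there is an $f$-increasing path from $x_1$ to $x_2$; $\mathrm{anc}_h(x)$ is the unique ancestor of $x$ at height $h\ge f(x)$; $\mathbb{L}_h=\{x:f(x)=h\}$. A layer-order is a family $(\le_h)_{h\ge0}$ of total orders on the $\mathbb{L}_h$ that is consistent: for $h_1\le h_2$ and $x_1,x_2\in\mathbb{L}_{h_1}$, $x_1\le_{h_1}x_2$ implies $\mathrm{anc}_{h_2}(x_1)\le_{h_2}\mathrm{anc}_{h_2}(x_2)$. An ordered merge tree is $(T,f,(\le_h))$. *)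

From HB Require Import structures.
From mathcomp Require Import all_boot all_order all_algebra.
From mathcomp Require Import reals.
Set Implicit Arguments. Unset Strict Implicit. Unset Printing Implicit Defensive.
Import Order.TTheory GRing.Theory Num.Theory.
Local Open Scope ring_scope.

(* A merge tree (T, f).
   - The underlying finite rooted tree has vertex set [mt_V], root [mt_root],
     and parent map [mt_par] (with par root = root); every vertex reaches the
     root by iterating [mt_par], so the parent graph is a tree rooted at root.
   - [mt_f v] is the (finite, real) height of a non-root vertex v; the root
     has height +infinity (it is never used as a real number).
   - f strictly increases towards the root: f v < f (par v) whenever both are
     non-root (an edge into the root goes up to +infinity).
   - the lowest leaf is at height 0.
   Points of the topological realisation.  Since f is continuous and strictly
   increasing along every edge, a point of the edge [v, par v) is determined
   by v and its height t.  So a non-root point of |T| is encoded uniquely by a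
   pair (v, t) : V * R with v non-root and f v <= t < f (par v) (the upper bound
   being +infinity when par v is the root); t is its f-value.  The vertex v
   itself is the point (v, f v).  The root (f = infinity) never lies in a
   layer L_h (h real), so it is not encoded. *)

Record merge_tree (R : realType) := MergeTree {
  mt_V : finType;
  mt_root : mt_V;
  mt_par : mt_V -> mt_V;
  mt_f : mt_V -> R;
  mt_par_root : mt_par mt_root = mt_root;
  mt_rooted : forall v, exists n, iter n mt_par v = mt_root;
  mt_incr : forall v, v != mt_root -> mt_par v != mt_root ->
                      mt_f v < mt_f (mt_par v);
  mt_lowest_leaf :
    (exists2 l, (l != mt_root) && [forall w, mt_par w != l] & mt_f l = 0) /\
    (forall l, (l != mt_root) && [forall w, mt_par w != l] -> 0 <= mt_f l)
}.

Section MergeTreeDefs.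
Variables (R : realType) (MT : merge_tree R).

Local Notation V := (mt_V MT).
Local Notation root := (@mt_root _ MT).
Local Notation par := (@mt_par _ MT).
Local Notation f := (@mt_f _ MT).

Definition is_leaf (v : V) : bool := (v != root) && [forall w : V, par w != v].

Definition is_point (p : V * R) : bool :=
  [&& p.1 != root, f p.1 <= p.2 & (par p.1 == root) || (p.2 < f (par p.1))].

Definition vpt (v : V) : V * R := (v, f v).

Definition in_layer (h : R) (p : V * R) : Prop := is_point p /\ p.2 = h.

(* x1 <= x2 (x1 "precedes" x2): there is an f-increasing path from x1 to x2,
   i.e. x2's edge is reached from x1's edge by going up and f(x1) <= f(x2). *)
Definition mt_prec (x y : V * R) : Prop :=
  [/\ is_point x, is_point y, (exists k, iter k par x.1 = y.1) & x.2 <= y.2].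

Definition is_anc (h : R) (x y : V * R) : Prop := mt_prec x y /\ y.2 = h.

Definition layer_order (le : R -> V * R -> V * R -> Prop) : Prop :=
  (forall h, 0 <= h ->
     [/\ (forall x, in_layer h x -> le h x x),
         (forall x y, in_layer h x -> in_layer h y ->
                      le h x y -> le h y x -> x = y),
         (forall x y z, in_layer h x -> in_layer h y -> in_layer h z ->
                        le h x y -> le h y z -> le h x z)
       & (forall x y, in_layer h x -> in_layer h y -> le h x y \/ le h y x)])
  /\
  (forall h1 h2 x1 x2 y1 y2, 0 <= h1 -> h1 <= h2 ->
     in_layer h1 x1 -> in_layer h1 x2 -> le h1 x1 x2 ->
     is_anc h2 x1 y1 -> is_anc h2 x2 y2 -> le h2 y1 y2).

Definition leaf_rel (le : R -> V * R -> V * R -> Prop) (u1 u2 : V) : Prop :=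
  let h := Num.max (f u1) (f u2) in
  exists y1 y2, [/\ is_anc h (vpt u1) y1, is_anc h (vpt u2) y2 & le h y1 y2].

End MergeTreeDefs.

From HB Require Import structures.
From mathcomp Require Import all_boot all_order all_algebra.
From mathcomp Require Import reals.
Import Order.TTheory GRing.Theory Num.Theory.
Local Open Scope ring_scope.

(* Since f strictly increases towards the root, every point has exactly one
   ancestor at each height h >= f(x), and taking ancestors is transitive.  By
   consistency of the layer-order, u1 [=_L u2 therefore lifts to
   anc_H(u1) <=_H anc_H(u2) at every height H above both leaves, so any two or
   three leaves can be compared in a single layer, where <=_H is a total order.
   The only obstruction is a leaf u that sits strictly above the comparison
   height of the others: there anc_(f u)(u) = u itself, and u can be the
   ancestor of another leaf only if the two coincide, since leaves have no
   children. *)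

Section Ancestors.
Set Implicit Arguments.
Context {R : realType} {T : merge_tree R}.
Local Notation V := (mt_V T).
Local Notation root := (@mt_root _ T).
Local Notation par := (@mt_par _ T).
Local Notation f := (@mt_f _ T).
Implicit Types (x y z a : V * R) (u v : V).

Lemma iter_par_root n : iter n par root = root.
Proof. by elim: n => //= n ->; exact: mt_par_root. Qed.

Lemma f_le_iter_par j v : iter j par v != root -> f v <= f (iter j par v).
Proof.
elim: j v => [|j IHj] v; first by rewrite lexx.
rewrite iterSr => jv_root.
have pv_root : par v != root by apply: contraNneq jv_root => ->; rewrite iter_par_root.
have v_root : v != root by apply: contraNneq pv_root => ->; rewrite mt_par_root.
exact: le_trans (ltW (mt_incr v_root pv_root)) (IHj _ jv_root).
Qed.

Lemma anc_unique h x y z : is_anc h x y -> is_anc h x z -> y = z.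
Proof.
case: y z => [w1 t1] [w2 t2] [[_ Pw1 [k1 /= Ek1] _] /= e1] [[_ Pw2 [k2 /= Ek2] _] /= e2].
subst t1 t2.
wlog k12 : k1 k2 w1 w2 Ek1 Ek2 Pw1 Pw2 / (k1 <= k2)%N.
  move=> W; case: (leqP k1 k2) => [/W|/ltnW/W]; first exact.
  by move=> /(_ _ _ Ek2 Ek1 Pw2 Pw1).
have : iter (k2 - k1) par w1 = w2 by rewrite -Ek1 -iterD subnK.
case: (k2 - k1)%N => [/= -> //|j]; rewrite iterSr => Ej.
move: Pw1 Pw2; rewrite /is_point /= => /and3P[_ _ w1_top] /and3P[w2_root fw2 _].
case/orP: w1_top => [/eqP pw1_root | h_lt].
  by move: w2_root; rewrite -Ej pw1_root iter_par_root eqxx.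
have := f_le_iter_par j (par w1); rewrite Ej => /(_ w2_root) fpw1.
by move: (lt_le_trans h_lt (le_trans fpw1 fw2)); rewrite ltxx.
Qed.

Lemma anc_trans h h' x y z : is_anc h x y -> is_anc h' y z -> is_anc h' x z.
Proof.
move=> [[Px _ [k1 Ek1] xy] _] [[_ Pz [k2 Ek2] yz] z_h'].
split=> //; split=> //; last exact: le_trans xy yz.
by exists (k2 + k1)%N; rewrite iterD Ek1.
Qed.

Lemma anc_exists h [x] : is_point x -> x.2 <= h -> exists y, is_anc h x y.
Proof.
move=> Px xh.
suff [k /and3P[kx_root fkx kx_top]] : exists k,
    [&& iter k par x.1 != root, f (iter k par x.1) <= h &
        (par (iter k par x.1) == root) || (h < f (par (iter k par x.1)))].
  by exists (iter k par x.1, h); do !split=> //; [rewrite /is_point /= kx_root fkx | exists k].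
have [n En] := mt_rooted x.1.
move: Px; rewrite /is_point => /and3P[x_root fx _].
elim: n x.1 x_root (le_trans fx xh) En => [|n IHn] v v_root fv; first by move=> /= En; rewrite En eqxx in v_root.
case v_top: ((par v == root) || (h < f (par v))); first by exists 0%N; rewrite /= v_root fv v_top.
move/negbT: v_top; rewrite negb_or -leNgt => /andP[pv_root fpv].
rewrite iterSr => En; have [k Hk] := IHn _ pv_root fpv En.
by exists k.+1; rewrite iterSr.
Qed.

Lemma anc_in_layer h x y : is_anc h x y -> in_layer h y.
Proof. by case=> -[]. Qed.

Lemma anc_height_ge h x y : is_anc h x y -> x.2 <= h.
Proof. by case=> -[_ _ _ xy] <-. Qed.

Lemma anc_of_anc h H x a y : is_anc h x a -> h <= H -> is_anc H x y -> is_anc H a y.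
Proof.
move=> xa hH xy; have [[_ Pa _ _] a_h] := xa.
have [b ab] : exists b, is_anc H a b by apply: anc_exists Pa _; rewrite a_h.
by rewrite -(anc_unique (anc_trans xa ab) xy).
Qed.

Lemma leaf_point [u] : is_leaf u -> is_point (vpt u).
Proof.
case/andP=> u_root _; rewrite /is_point /= u_root lexx /=.
by case: eqP => [//|/eqP pu_root]; exact: mt_incr.
Qed.

Lemma leaf_f_ge0 [u] : is_leaf u -> 0 <= f u.
Proof. exact: (mt_lowest_leaf T).2. Qed.

Lemma leaf_anc_self [u] : is_leaf u -> is_anc (f u) (vpt u) (vpt u).
Proof. by move=> /leaf_point Pu; do !split=> //; exists 0%N. Qed.

Lemma leaf_anc_exists [u] h : is_leaf u -> f u <= h -> exists y, is_anc h (vpt u) y.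
Proof. by move=> /leaf_point; exact: anc_exists. Qed.

Lemma anc_leaf_eq u1 u2 : is_leaf u2 -> is_anc (f u2) (vpt u1) (vpt u2) -> u1 = u2.
Proof.
move=> /andP[_ /forallP u2_childless] [[_ _ [[|k] /= Ek] _] _] //.
by have := u2_childless (iter k par u1); rewrite Ek eqxx.
Qed.

Lemma leaf_common_anc u1 u2 y : is_leaf u2 ->
  is_anc (f u2) (vpt u1) y -> is_anc (f u2) (vpt u2) y -> u1 = u2.
Proof.
move=> L2 u1y u2y; rewrite -(anc_unique (leaf_anc_self L2) u2y) in u1y.
exact: anc_leaf_eq u1y.
Qed.

End Ancestors.

Section LeafOrder.
Set Implicit Arguments.
Context {R : realType} {T : merge_tree R} {le : R -> mt_V T * R -> mt_V T * R -> Prop}.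
Hypothesis le_layer : layer_order le.
Local Notation f := (@mt_f _ T).
Implicit Types (x y a b : mt_V T * R) (u : mt_V T).

Lemma le_anc h H x y a b A B : 0 <= h -> h <= H ->
  is_anc h x a -> is_anc h y b -> le h a b ->
  is_anc H x A -> is_anc H y B -> le H A B.
Proof.
move=> h_ge0 hH xa yb ab xA yB.
exact: le_layer.2 h_ge0 hH (anc_in_layer xa) (anc_in_layer yb) ab
  (anc_of_anc xa hH xA) (anc_of_anc yb hH yB).
Qed.

Lemma leaf_max_ge0 [u1] u2 : is_leaf u1 -> 0 <= Num.max (f u1) (f u2).
Proof. by move=> /leaf_f_ge0 fu1; rewrite le_max fu1. Qed.

Lemma leaf_rel_anc u1 u2 H A1 A2 : is_leaf u1 -> leaf_rel le u1 u2 ->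
  Num.max (f u1) (f u2) <= H ->
  is_anc H (vpt u1) A1 -> is_anc H (vpt u2) A2 -> le H A1 A2.
Proof.
move=> L1 [y1 [y2 [u1y1 u2y2 y12]]] hH; exact: le_anc (leaf_max_ge0 _ L1) hH u1y1 u2y2 y12.
Qed.

Lemma leaf_rel_refl u : is_leaf u -> leaf_rel le u u.
Proof.
move=> L; have [refl _ _ _] := le_layer.1 _ (leaf_f_ge0 L).
rewrite /leaf_rel maxxx; exists (vpt u), (vpt u).
by split; [exact: leaf_anc_self .. | exact/refl/anc_in_layer/leaf_anc_self].
Qed.

Lemma leaf_rel_anti u1 u2 : is_leaf u1 -> is_leaf u2 ->
  leaf_rel le u1 u2 -> leaf_rel le u2 u1 -> u1 = u2.
Proof.
move=> L1 L2 [y1 [y2 [u1y1 u2y2 y12]]]; rewrite /leaf_rel maxC.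
move=> [z2 [z1 [u2z2 u1z1]]]; rewrite -(anc_unique u1y1 u1z1) -(anc_unique u2y2 u2z2) => y21.
have [_ anti _ _] := le_layer.1 _ (leaf_max_ge0 u2 L1).
have y1_y2 := anti _ _ (anc_in_layer u1y1) (anc_in_layer u2y2) y12 y21.
rewrite {}y1_y2 in u1y1.
case: (leP (f u1) (f u2)) => [f12|/ltW f21].
  by rewrite max_r // in u1y1 u2y2; exact: leaf_common_anc u1y1 u2y2.
by rewrite max_l // in u1y1 u2y2; symmetry; exact: leaf_common_anc u2y2 u1y1.
Qed.

Lemma leaf_rel_peak u1 u2 u3 h c1 c3 : is_leaf u1 -> is_leaf u2 -> is_leaf u3 ->
  leaf_rel le u1 u2 -> leaf_rel le u2 u3 -> 0 <= h -> h <= f u2 ->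
  is_anc h (vpt u1) c1 -> is_anc h (vpt u3) c3 -> le h c3 c1 -> u1 = u2.
Proof.
move=> L1 L2 L3 r12 r23 h_ge0 hf2 u1c1 u3c3 c31.
have [f1h f3h] := (anc_height_ge u1c1, anc_height_ge u3c3).
have [A1 u1A1] := leaf_anc_exists (f u2) L1 (le_trans f1h hf2).
have [A3 u3A3] := leaf_anc_exists (f u2) L3 (le_trans f3h hf2).
have u2u2 := leaf_anc_self L2.
have A12 : le (f u2) A1 (vpt u2).
  by apply: leaf_rel_anc L1 r12 _ u1A1 u2u2; rewrite ge_max (le_trans f1h hf2) lexx.
have A23 : le (f u2) (vpt u2) A3.
  by apply: leaf_rel_anc L2 r23 _ u2u2 u3A3; rewrite ge_max lexx (le_trans f3h hf2).
have A31 : le (f u2) A3 A1 := le_anc h_ge0 hf2 u3c3 u1c1 c31 u3A3 u1A1.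
have [_ anti trans _] := le_layer.1 _ (leaf_f_ge0 L2).
move: (anc_in_layer u1A1) (anc_in_layer u3A3) (anc_in_layer u2u2) => LA1 LA3 L2u2.
have A1_u2 := anti _ _ LA1 L2u2 A12 (trans _ _ _ L2u2 LA3 LA1 A23 A31).
by rewrite A1_u2 in u1A1; exact: anc_leaf_eq L2 u1A1.
Qed.

Lemma leaf_rel_trans u1 u2 u3 : is_leaf u1 -> is_leaf u2 -> is_leaf u3 ->
  leaf_rel le u1 u2 -> leaf_rel le u2 u3 -> leaf_rel le u1 u3.
Proof.
move=> L1 L2 L3 r12 r23; set h := Num.max (f u1) (f u3).
have f1h : f u1 <= h by rewrite le_max lexx.
have f3h : f u3 <= h by rewrite le_max lexx orbT.
have [c1 u1c1] := leaf_anc_exists h L1 f1h.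
have [c3 u3c3] := leaf_anc_exists h L3 f3h.
have h_ge0 : 0 <= h := leaf_max_ge0 u3 L1.
have [_ _ trans total] := le_layer.1 _ h_ge0.
exists c1, c3; split=> //; case: (leP (f u2) h) => [f2h | hf2].
  have [c2 u2c2] := leaf_anc_exists h L2 f2h.
  have c12 : le h c1 c2 by apply: leaf_rel_anc L1 r12 _ u1c1 u2c2; rewrite ge_max f1h f2h.
  have c23 : le h c2 c3 by apply: leaf_rel_anc L2 r23 _ u2c2 u3c3; rewrite ge_max f2h f3h.
  exact: trans (anc_in_layer u1c1) (anc_in_layer u2c2) (anc_in_layer u3c3) c12 c23.
case: (total _ _ (anc_in_layer u1c1) (anc_in_layer u3c3)) => // c31.
have e12 := leaf_rel_peak L1 L2 L3 r12 r23 h_ge0 (ltW hf2) u1c1 u3c3 c31.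
by move: hf2; rewrite -e12 ltNge f1h.
Qed.

Lemma leaf_rel_total u1 u2 : is_leaf u1 -> is_leaf u2 ->
  leaf_rel le u1 u2 \/ leaf_rel le u2 u1.
Proof.
move=> L1 L2; set h := Num.max (f u1) (f u2).
have f1h : f u1 <= h by rewrite le_max lexx.
have f2h : f u2 <= h by rewrite le_max lexx orbT.
have [y1 u1y1] := leaf_anc_exists h L1 f1h.
have [y2 u2y2] := leaf_anc_exists h L2 f2h.
have [_ _ _ total] := le_layer.1 _ (leaf_max_ge0 u2 L1).
case: (total _ _ (anc_in_layer u1y1) (anc_in_layer u2y2)) => y12.
  by left; exists y1, y2.
by right; rewrite /leaf_rel maxC; exists y2, y1.
Qed.

End LeafOrder.

Theorem lemma2 (R : realType) (T : merge_tree R)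
    (le : R -> mt_V T * R -> mt_V T * R -> Prop) :
  layer_order le ->
  [/\ (forall u, is_leaf u -> leaf_rel le u u),
      (forall u1 u2, is_leaf u1 -> is_leaf u2 ->
         leaf_rel le u1 u2 -> leaf_rel le u2 u1 -> u1 = u2),
      (forall u1 u2 u3, is_leaf u1 -> is_leaf u2 -> is_leaf u3 ->
         leaf_rel le u1 u2 -> leaf_rel le u2 u3 -> leaf_rel le u1 u3)
    & (forall u1 u2, is_leaf u1 -> is_leaf u2 ->
         leaf_rel le u1 u2 \/ leaf_rel le u2 u1)].
Proof.
move=> le_layer; split.
- exact: leaf_rel_refl.
- exact: leaf_rel_anti.
- exact: leaf_rel_trans.
- exact: leaf_rel_total.
Qed.
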